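(* Let $\lambda$ be an uncountable strong limit cardinal of countable cofinality, let $\dot U$ be a unary predicate symbol, let $\varphi(v_1,\dots,v_n)$ be an $\mathcal{L}_{\in}(\dot U)$-formula and let $\alpha_1,\dots,\alpha_n<\lambda$. Then the set $\{(z_1,z_2)\in\mathsf{BC}_\lambda\times{}^{\lambda}2: (\lambda,\in_{z_1},U_{z_2})\models\varphi(\alpha_1,\dots,\alpha_n)\}$ is $\lambda$-Borel in $\mathsf{BC}_\lambda\times{}^{\lambda}2$.
   Context: Fix a bijective ordinal pairing function $\langle\cdot,\cdot\rangle:\lambda\times\lambda\to\lambda$. For $z\in{}^{\lambda}2$, $E_z$ (also written $\in_z$) is the binary relation on $\lambda$ with $\alpha\,E_z\,\beta$ iff $z(\langle\alpha,\beta\rangle)=0$, and $U_z=\{\alpha<\lambda: z(\alpha)=1\}$. If $(\lambda,E_z)$ is extensional and well-founded, $\pi_z$ is its transitive collapse. $\mathsf{BC}_\lambda$ is the set of $z$ such that $(\lambda,E_z)$ is extensional and well-founded and for each $b\in H_\lambda$, if $\pi_z^{-1}(b)$ exists then its set of $E_z$-predecessors is bounded in $\lambda$. ${}^{\lambda}2$ has the bounded topology (basic open sets $N_s=\{x:s\subseteq x\}$, $s\in{}^{\alpha}2$, $\alpha<\lambda$); a set is $\lambda$-Borel in a space if it belongs to the smallest $\lambda^+$-algebra containing the open sets of that space (here the subspace topology on $\mathsf{BC}_\lambda\times{}^{\lambda}2$). *)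

(* plain Rocq.  lambda is modelled as a type T carrying a
   strict well-order lt whose order type is the cardinal lambda. *)
From Stdlib Require Import Relations.

Set Implicit Arguments.

Section Card.
Variable T : Type.
Variable lt : T -> T -> Prop.

Definition injective {A B : Type} (f : A -> B) := forall x y, f x = f y -> x = y.

Definition card_le (A B : Type) := exists f : A -> B, injective f.
Definition card_lt (A B : Type) := card_le A B /\ ~ card_le B A.

Definition strict_wellorder :=
  (forall a, ~ lt a a) /\
  (forall a b c, lt a b -> lt b c -> lt a c) /\
  (forall a b, lt a b \/ a = b \/ lt b a) /\
  well_founded lt.

Definition below (a : T) := { b : T | lt b a }.

(* the order type of (T,lt) is a cardinal: every proper initial
   segment has strictly smaller cardinality *)
Definition is_cardinal_order := forall a, card_lt (below a) T.

Definition uncountable := ~ card_le T nat.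

Definition strong_limit := forall a, card_lt (below a -> bool) T.

Definition countable_cofinality :=
  exists s : nat -> T, forall a, exists n, lt a (s n).

Definition bijective2 (p : T -> T -> T) :=
  (forall a b c d, p a b = p c d -> a = c /\ b = d) /\
  (forall g, exists a b, p a b = g).

Definition Erel (p : T -> T -> T) (z : T -> bool) (a b : T) := z (p a b) = false.
Definition Upred (z : T -> bool) (a : T) := z a = true.

Definition extensional (E : T -> T -> Prop) :=
  forall a b, (forall c, E c a <-> E c b) -> a = b.

(* The condition "for each b in H_lambda, if pi_z^{-1}(b)
   exists then its set of E_z-predecessors is bounded" is rendered as:
   for each a whose collapse pi_z(a) lies in H_lambda, i.e. whose set
   of E_z-descendants (transitive closure of E_z below a, which pi_z maps
   bijectively onto trcl(pi_z(a))) has cardinality < lambda, the set of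
   E_z-predecessors of a is bounded in lambda. *)
Definition BC (p : T -> T -> T) (z : T -> bool) :=
  let E := Erel p z in
  extensional E /\ well_founded E /\
  forall a, card_lt { b : T | clos_trans T E b a } T ->
    exists g, forall b, E b a -> lt b g.

Definition X := ((T -> bool) * (T -> bool))%type.

(* basic open N_s, s in 2^a (s given as a function on T, only its
   restriction to a matters) *)
Definition Nbasic (a : T) (s : T -> bool) (x : T -> bool) :=
  forall b, lt b a -> x b = s b.

Definition is_open (O : X -> Prop) :=
  forall q, O q -> exists a s a' s',
    Nbasic a s (fst q) /\ Nbasic a' s' (snd q) /\
    forall q', Nbasic a s (fst q') -> Nbasic a' s' (snd q') -> O q'.

(* lambda-Borel subsets of the subspace S of X: the smallest family of
   subsets of S containing the relatively open sets and closed under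
   relative complement and unions of <= lambda many sets (families are
   indexed by T; nonempty families of size <= lambda are obtained by
   repetition, the empty set is open). *)
Inductive lamBorel (S : X -> Prop) : (X -> Prop) -> Prop :=
| lB_open : forall O, is_open O -> lamBorel S (fun q => S q /\ O q)
| lB_compl : forall A, lamBorel S A -> lamBorel S (fun q => S q /\ ~ A q)
| lB_union : forall F : T -> X -> Prop, (forall i, lamBorel S (F i)) ->
    lamBorel S (fun q => exists i, F i q)
| lB_ext : forall A B, lamBorel S A -> (forall q, A q <-> B q) -> lamBorel S B.

End Card.

(* first-order formulas of L_in(U) with de Bruijn variables *)
Inductive form : Type :=
| fMem : nat -> nat -> form
| fEq  : nat -> nat -> form
| fU   : nat -> form
| fNeg : form -> form
| fAnd : form -> form -> form
| fEx  : form -> form.           (* exists v_0, binds index 0 *)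

Definition scons {T : Type} (a : T) (e : nat -> T) (n : nat) : T :=
  match n with 0 => a | S m => e m end.

Fixpoint sat {T : Type} (E : T -> T -> Prop) (U : T -> Prop)
  (e : nat -> T) (f : form) : Prop :=
  match f with
  | fMem i j => E (e i) (e j)
  | fEq i j => e i = e j
  | fU i => U (e i)
  | fNeg g => ~ sat E U e g
  | fAnd g h => sat E U e g /\ sat E U e h
  | fEx g => exists a, sat E U (scons a e) g
  end.

(* Every atomic formula [alpha_i E_z alpha_j] or [U_z(alpha_i)] depends on a
   single coordinate of [z], hence defines a relatively open set, since every
   point of lambda lies in a bounded initial segment.  Equality atoms define
   the whole space or the empty set.  Negation and conjunction are handled by
   relative complements and (binary) unions, and an existential quantifier
   over lambda is a union of lambda many sets, so induction on the formula
   shows that every satisfaction set is lambda-Borel.  None of this uses the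
   restriction to BC_lambda. *)
From Stdlib Require Import Classical.

Section Borel.

Variable T : Type.
Variable lt : T -> T -> Prop.
Variable S : X T -> Prop.

Lemma is_open_True (a : T) : is_open lt (fun _ : X T => True).
Proof. intros q _; exists a, (fst q), a, (snd q); repeat split; auto. Qed.

Lemma is_open_False : is_open lt (fun _ : X T => False).
Proof. intros q []. Qed.

Lemma lamBorel_compl {P : X T -> Prop} :
  lamBorel lt S (fun q => S q /\ P q) -> lamBorel lt S (fun q => S q /\ ~ P q).
Proof. intro HP; apply (lB_ext _ (lB_compl HP)); intro q; tauto. Qed.

(* Binary unions are unions of families indexed by T, which needs two distinct indices. *)
Lemma lamBorel_union2 {t0 t1 : T} (Ht : t0 <> t1) {A B : X T -> Prop} :
  lamBorel lt S A -> lamBorel lt S B -> lamBorel lt S (fun q => A q \/ B q).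
Proof.
  intros HA HB.
  set (F := fun i q => (i = t0 /\ A q) \/ (i <> t0 /\ B q)).
  assert (HF : forall i, lamBorel lt S (F i)).
  { intro i; destruct (classic (i = t0)) as [->|Hi].
    - apply (lB_ext _ HA); intro q; unfold F; tauto.
    - apply (lB_ext _ HB); intro q; unfold F; tauto. }
  apply (lB_ext _ (lB_union _ HF)); intro q; split.
  - intros [i [[_ H]|[_ H]]]; auto.
  - intros [H|H]; [exists t0 | exists t1]; unfold F; auto.
Qed.

Lemma lamBorel_and {t0 t1 : T} (Ht : t0 <> t1) {P Q : X T -> Prop} :
  lamBorel lt S (fun q => S q /\ P q) -> lamBorel lt S (fun q => S q /\ Q q) ->
  lamBorel lt S (fun q => S q /\ P q /\ Q q).
Proof.
  intros HP HQ.
  pose proof (lB_compl (lamBorel_union2 Ht (lamBorel_compl HP) (lamBorel_compl HQ)))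
    as HPQ.
  apply (lB_ext _ HPQ); intro q; split.
  - intros [Hs HN]; split; [exact Hs|].
    split; apply NNPP; intro N; apply HN; tauto.
  - tauto.
Qed.

Section Unbounded.

Hypothesis unbounded : forall c : T, exists a, lt c a.

Lemma is_open_fst_eq (c : T) (b : bool) : is_open lt (fun q : X T => fst q c = b).
Proof.
  intros q Hq; destruct (unbounded c) as [a Hca].
  exists a, (fst q), a, (snd q); repeat split; auto.
  intros q' H1 _; now rewrite (H1 c Hca).
Qed.

Lemma is_open_snd_eq (c : T) (b : bool) : is_open lt (fun q : X T => snd q c = b).
Proof.
  intros q Hq; destruct (unbounded c) as [a Hca].
  exists a, (fst q), a, (snd q); repeat split; auto.
  intros q' _ H2; now rewrite (H2 c Hca).
Qed.

Lemma lamBorel_sat (pair : T -> T -> T) {t0 t1 : T} (Ht : t0 <> t1)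
  (phi : form) (alpha : nat -> T) :
  lamBorel lt S (fun q => S q /\ sat (Erel pair (fst q)) (Upred (snd q)) alpha phi).
Proof.
  revert alpha; induction phi as [i j|i j|i|phi IH|phi IH psi IH'|phi IH];
    intro alpha; simpl.
  - exact (lB_open S (is_open_fst_eq (pair (alpha i) (alpha j)) false)).
  - destruct (classic (alpha i = alpha j)) as [e|e].
    + apply (lB_ext _ (lB_open S (is_open_True t0))); intro q; tauto.
    + apply (lB_ext _ (lB_open S is_open_False)); intro q; tauto.
  - exact (lB_open S (is_open_snd_eq (alpha i) true)).
  - exact (lamBorel_compl (IH alpha)).
  - exact (lamBorel_and Ht (IH alpha) (IH' alpha)).
  - apply (lB_ext _ (lB_union _ (fun a => IH (scons a alpha)))); intro q; split.
    + intros [a [Hs Ha]]; eauto.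
    + intros [Hs [a Ha]]; eauto.
Qed.

End Unbounded.

End Borel.

Lemma uncountable_two_points {T : Type} : uncountable T -> exists t0 t1 : T, t0 <> t1.
Proof.
  intro Hunc; apply NNPP; intro N; apply Hunc.
  exists (fun _ => 0); intros x y _.
  apply NNPP; intro Hxy; apply N; eauto.
Qed.

Lemma countable_cofinality_unbounded {T : Type} {lt : T -> T -> Prop} :
  countable_cofinality lt -> forall c : T, exists a, lt c a.
Proof. intros [s Hs] c; destruct (Hs c) as [n Hn]; eauto. Qed.

Theorem lemma3 (T : Type) (lt : T -> T -> Prop)
  (Hwo : strict_wellorder lt) (Hcard : is_cardinal_order lt)
  (Hunc : uncountable T) (Hsl : strong_limit lt)
  (Hcof : countable_cofinality lt)
  (pair : T -> T -> T) (Hpair : bijective2 pair)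
  (phi : form) (alpha : nat -> T) :
  lamBorel lt (fun q : X T => BC lt pair (fst q))
    (fun q : X T => BC lt pair (fst q) /\
       sat (Erel pair (fst q)) (Upred (snd q)) alpha phi).
Proof.
  destruct (uncountable_two_points Hunc) as [t0 [t1 Ht]].
  exact (lamBorel_sat _ _ _
           (countable_cofinality_unbounded Hcof) pair Ht phi alpha).
Qed.
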